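(* Let $n\ge3$ and let $b_1,\dots,b_n$ be positive integers. For $k=0,\dots,b_1+\dots+b_n-\max\{b_1,\dots,b_n\}$, $$A([\mathbf b],k)=\sum_{(i_2,\dots,i_{n-1})\in\Delta}A_{i_2}A_{i_2,i_3}A_{i_3,i_4}\cdots A_{i_{n-1},i_n},$$ where $i_n:=k$, $A_{i_2}=\binom{b_1}{i_2}\binom{b_2}{i_2}$, and for $s=2,\dots,n-1$, $$A_{i_s,i_{s+1}}=\binom{b_1+\dots+b_s-i_s}{i_{s+1}-i_s}\binom{b_{s+1}+i_s}{i_{s+1}}\ge0,$$ and $\Delta$ is the set of integer tuples $(i_2,\dots,i_{n-1})$ with $0\le i_s\le\min\{b_1+\dots+b_s-\max\{b_1,\dots,b_s\},\ i_{s+1}\}$ for $s=2,\dots,n-1$. In particular each $A([\mathbf b],k)$ is a sum of products of nonnegative integers.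
   Context: $A([\mathbf b],k)$ (Simon Newcomb number) is the number of words $u_1\cdots u_N$, $N=b_1+\dots+b_n$, over $\{1,\dots,n\}$ containing the letter $i$ exactly $b_i$ times, having exactly $k$ descents, where a descent is an index $m$ with $u_m>u_{m+1}$. Binomial coefficients $\binom{a}{m}$ are taken to be $0$ when $m<0$ or $m>a$. *)

From mathcomp Require Import all_boot.
Set Implicit Arguments. Unset Strict Implicit. Unset Printing Implicit Defensive.

(* The multiplicity vector b = [:: b_1; ...; b_n] is a seq nat; b_i = nth 0 b (i-1).
   Letters 1..n are encoded as ordinals 0..n-1 of 'I_n (order-preserving). *)

Definition descents (n : nat) (w : seq 'I_n) : nat :=
  count (fun p : 'I_n * 'I_n => (p.2 < p.1)%N) (zip w (behead w)).

Definition newcomb (b : seq nat) (k : nat) : nat :=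
  #|[set w : (sumn b).-tuple 'I_(size b) |
      [forall j : 'I_(size b), count_mem j w == nth 0 b j]
      && (descents w == k)]|.

Definition psum (b : seq nat) (s : nat) : nat := sumn (take s b).
Definition pmax (b : seq nat) (s : nat) : nat := foldr maxn 0 (take s b).

(* the index function s |-> i_s, for s = 2..n-1 read from the tuple t, and i_n := k *)
Definition idx (n k : nat) (t : seq nat) (s : nat) : nat :=
  if s == n then k else nth 0 t (s - 2).

Definition A2 (b : seq nat) (i2 : nat) : nat :=
  'C(nth 0 b 0, i2) * 'C(nth 0 b 1, i2).

Definition Ast (b : seq nat) (i_s i_s1 s : nat) : nat :=
  'C(psum b s - i_s, i_s1 - i_s) * 'C(nth 0 b s + i_s, i_s1).

Definition inDelta (b : seq nat) (n k : nat) (t : seq nat) : bool :=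
  all (fun s => idx n k t s <= minn (psum b s - pmax b s) (idx n k t s.+1))
      (index_iota 2 n).

From mathcomp Require Import all_boot zify.
Set Implicit Arguments. Unset Strict Implicit. Unset Printing Implicit Defensive.

(* Words are handled as lists of naturals, letter i < n standing for i + 1.
   The heart of the argument is an insertion count: inserting c copies of a
   new largest letter L into a word u of length N with i descents produces
   exactly  C(N - i, j - i) * C(c + i, j)  words with j descents.  We prove it
   on an explicit enumeration  ins L u c  of these insertions, by induction
   on u and c, the two binomials obeying Pascal's rule in the two cases
   "next letter of u" / "next letter is a copy of L".
   Enumerating all words with multiplicities b by successive insertions of
   the letters 0, 1, ..., n-1 gives the recurrence
     A([b, c], j) = sum_(i <= j) A([b], i) C(|b| - i, j - i) C(c + i, j),
   and A([b], i) = 0 once i > |b| - max b.  Unrolling the recurrence from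
   A([b1, b2], i) = C(b1, i) C(b2, i) yields the Delta-sum, the truncation
   i_s <= |b|_s - max_s b being harmless because of the vanishing. *)

Section Insertion.
Variable T : Type.

(* [ins L u c] lists the words obtained by inserting c copies of L into u,
   sorted by their first letter: the head of u, or a copy of L. *)
Fixpoint ins (L : T) (u : seq T) (c : nat) : seq (seq T) :=
  match u with
  | [::] => [:: nseq c L]
  | x :: u' => (fix ins_cons c := [seq x :: w | w <- ins L u' c] ++
                  (if c is c'.+1 then [seq L :: w | w <- ins_cons c'] else [::])) c
  end.

Lemma ins_0 L u : ins L u 0 = [:: u].
Proof. by elim: u => //= x u ->. Qed.

Lemma ins_nilS L c : ins L [::] c.+1 = [seq L :: w | w <- ins L [::] c].
Proof. by []. Qed.

Lemma ins_consS L x u c : ins L (x :: u) c.+1 =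
  [seq x :: w | w <- ins L u c.+1] ++ [seq L :: w | w <- ins L (x :: u) c].
Proof. by []. Qed.

End Insertion.

Section InsertionCount.
Variable T : eqType.
Implicit Types (L x y : T) (u w : seq T) (c : nat).

Definition inserts L u c w : bool :=
  (filter (predC1 L) w == u) && (count_mem L w == c).

Lemma inserts_consL L u c w : inserts L u c.+1 (L :: w) = inserts L u c w.
Proof. by rewrite /inserts /= eqxx /= add1n eqSS. Qed.

Lemma inserts_cons L u c y w : y != L ->
  inserts L u c (y :: w) = if u is x :: u' then (y == x) && inserts L u' c w else false.
Proof.
move=> yL; rewrite /inserts /= yL (negbTE yL) add0n.
by case: u => [|x u] //; rewrite eqseq_cons -andbA.
Qed.

Lemma inserts0 L u w : L \notin u -> inserts L u 0 w = (w == u).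
Proof.
move=> Lu; apply/andP/eqP => [[/eqP <- /eqP/count_memPn Lw] | ->].
  by apply/esym/all_filterP/allP => y yw /=; apply: contraNneq Lw => <-.
split; apply/eqP; last exact/count_memPn.
by apply/all_filterP/allP => y yu /=; apply: contraNneq Lu => <-.
Qed.

Lemma count_mem_consl x y w (s : seq (seq T)) :
  count_mem (y :: w) [seq x :: v | v <- s] = (y == x) * count_mem w s.
Proof.
elim: s => [|v s IH] /=; first by rewrite muln0.
by rewrite IH eqseq_cons [x == y]eq_sym mulnDr; case: (y == x); rewrite ?mul1n ?mul0n.
Qed.

Lemma count_mem_nil x (s : seq (seq T)) : count_mem [::] [seq x :: v | v <- s] = 0.
Proof. by rewrite count_map (eq_count (a2 := pred0)) ?count_pred0. Qed.

Lemma count_ins L u c w : L \notin u -> count_mem w (ins L u c) = inserts L u c w.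
Proof.
elim: u => [|x u IHu] in c w *; elim: c w => [|c IHc] w Lu;
  try by rewrite ins_0 /= addn0 inserts0 // eq_sym.
  rewrite ins_nilS; case: w => [|y w]; first by rewrite count_mem_nil.
  rewrite count_mem_consl IHc //; case: (eqVneq y L) => [->|yL].
    by rewrite inserts_consL mul1n.
  by rewrite inserts_cons.
rewrite ins_consS count_cat; case: w => [|y w]; first by rewrite !count_mem_nil.
have [xL Lu'] : x != L /\ L \notin u by move: Lu; rewrite inE negb_or eq_sym => /andP.
rewrite !count_mem_consl IHu // IHc //; case: (eqVneq y L) => [->|yL].
  by rewrite eq_sym (negbTE xL) inserts_consL mul0n mul1n.
by rewrite inserts_cons // mul0n addn0; case: (y == x); rewrite ?mul1n ?mul0n.
Qed.

End InsertionCount.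

Fixpoint des (w : seq nat) : nat :=
  if w is x :: ((y :: _) as w') then (y < x) + des w' else 0.

Lemma des_cons2 p x w : des (p :: x :: w) = (x < p) + des (x :: w).
Proof. by []. Qed.

Lemma des_lead0 w : des (0 :: w) = des w.
Proof. by case: w. Qed.

Lemma des_lead_top p L w : p <= L -> des (p :: L :: w) = des (L :: w).
Proof. by move=> pL; rewrite des_cons2 ltnNge pL. Qed.

Lemma des_nseq p L c : p <= L -> des (p :: nseq c L) = 0.
Proof. by elim: c p => [|c IH] p pL //; rewrite [nseq _ _]/= des_lead_top // IH. Qed.

Lemma des_le p u : des (p :: u) <= size u.
Proof.
elim: u p => [|x u IH] p //.
by rewrite des_cons2; exact: leq_add (leq_b1 _) (IH x).
Qed.

(* [ins_des i N c j]: number of words with j descents obtained by inserting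
   c copies of a new largest letter into a word of length N with i descents. *)
Definition ins_des (i N c j : nat) : nat :=
  if i <= j then 'C(N - i, j - i) * 'C(c + i, j) else 0.

Lemma ins_des_0 i N j : ins_des i N 0 j = (i == j).
Proof.
rewrite /ins_des add0n; case: ltngtP => [ij|//|<-].
  by rewrite (bin_small ij) muln0.
by rewrite subnn bin0 binn.
Qed.

(* Pascal-type recurrence of [ins_des], mirroring the two ways a word of [ins]
   starts: with the first letter of u (after the prefix, which creates a
   descent d), or with a copy of the new letter (one more descent before u). *)
Lemma ins_des_S (d : bool) i N c j : i <= N ->
  ins_des (d + i) N.+1 c.+1 j =
  (if d <= j then ins_des i N c.+1 (j - d) else 0) + ins_des i.+1 N.+1 c j.
Proof.
move=> iN; rewrite /ins_des; case: d => /=.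
- case: j => [|j] //; rewrite subn1 /= add1n ltnS.
  case: leqP => // ij.
  have -> : N.+1 - i.+1 = N - i by lia.
  have -> : j.+1 - i.+1 = j - i by lia.
  by rewrite addnS binS mulnDr addnC addSnnS.
- rewrite subn0 add0n; case: ltngtP => [ij|//|<-]; last by rewrite subnn !bin0 addn0.
  rewrite subSS addnS -addSn.
  have -> : N.+1 - i = (N - i).+1 by lia.
  have -> : j - i = (j - i.+1).+1 by lia.
  by rewrite binS mulnDl.
Qed.

Lemma count_shift (T : Type) (s : seq T) (f : T -> nat) (d j : nat) :
  count (fun w => d + f w == j) s = if d <= j then count (fun w => f w == j - d) s else 0.
Proof.
case: leqP => dj; first by apply: eq_count => w; apply/eqP/eqP; lia.
by rewrite -(count_pred0 s); apply: eq_count => w /=; apply/eqP; lia.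
Qed.

Lemma count_des_ins L p u c j : p <= L -> all (fun x => x < L) u ->
  count (fun w => des (p :: w) == j) (ins L u c) = ins_des (des (p :: u)) (size u) c j.
Proof.
elim: u => [|x u IHu] in p c j *; move=> pL.
  move=> _; move: (des_nseq c pL) => /= ->; rewrite /ins_des bin0n addn0.
  by case: j => [|j]; rewrite ?bin0.
move=> /andP[xL u_lt]; elim: c p j pL => [|c IHc] p j pL.
  by rewrite ins_0 /= addn0 ins_des_0 eq_sym.
have shift_x : preim (cons x) (fun w => des (p :: w) == j) =1
                (fun w => (x < p) + des (x :: w) == j) by [].
have skip_L : preim (cons L) (fun w => des (p :: w) == j) =1
                (fun w => des (L :: w) == j).
  by move=> w; exact: (congr1 (eq_op^~ j) (des_lead_top w pL)).
rewrite ins_consS count_cat !count_map (eq_count shift_x) (eq_count skip_L).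
rewrite count_shift IHu ?(ltnW xL) // IHc // !des_cons2 xL add1n /=.
by rewrite ins_des_S ?des_le.
Qed.

(* The recursion runs on the reversed vector to be structural. *)
Fixpoint words_rev (r : seq nat) : seq (seq nat) :=
  if r is c :: r' then flatten [seq ins (size r') u c | u <- words_rev r'] else [:: [::]].

Definition words (b : seq nat) : seq (seq nat) := words_rev (rev b).

Lemma words_rcons b c :
  words (rcons b c) = flatten [seq ins (size b) u c | u <- words b].
Proof. by rewrite /words rev_rcons /= size_rev. Qed.

Definition valid (b w : seq nat) : bool :=
  all (fun x => x < size b) w &&
  all (fun j => count_mem j w == nth 0 b j) (iota 0 (size b)).

Lemma valid_rcons b c w :
  valid (rcons b c) w = valid b (filter (predC1 (size b)) w) && (count_mem (size b) w == c).
Proof.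
rewrite /valid size_rcons all_filter -addn1 iotaD all_cat /= add0n andbT.
rewrite nth_rcons ltnn eqxx -andbA; congr andb.
  by apply: eq_all => x /=; rewrite addn1 ltnS leq_eqVlt; case: eqVneq.
congr andb; apply: eq_in_all => j; rewrite mem_iota add0n /= => jb.
rewrite nth_rcons jb count_filter; congr (_ == _); apply: eq_count => z /=.
by case: (eqVneq z j) => [->|] //=; rewrite neq_ltn jb.
Qed.

Lemma count_words b w : count_mem w (words b) = valid b w.
Proof.
elim/last_ind: b w => [|b c IH] w.
  by rewrite /words /= /valid /= andbT addn0; case: w.
rewrite words_rcons count_flatten -map_comp valid_rcons.
set B := count_mem (size b) w == c.
have one_source u : u \in words b ->
    count_mem w (ins (size b) u c) = (filter (predC1 (size b)) w == u) && B.
  rewrite -has_pred1 has_count IH lt0b => /andP[/allP ub _].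
  by rewrite count_ins //; apply/negP => /ub; rewrite ltnn.
rewrite (eq_in_map _ (fun u => (filter (predC1 (size b)) w == u) && B : nat) _).1 //.
rewrite sumn_count; clear one_source; case: B.
  by rewrite andbT -IH; apply: eq_count => u; rewrite andbT eq_sym.
by rewrite andbF /= -(count_pred0 (words b)); apply: eq_count => u; rewrite andbF.
Qed.

Lemma sum_by_value (T : Type) (s : seq T) (g : T -> nat) (F : nat -> nat) (M : nat) :
  \sum_(u <- s) (if g u < M then F (g u) else 0) =
  \sum_(i < M) count (fun u => g u == i) s * F i.
Proof.
under eq_bigr do rewrite -(big_ord1_eq addn F).
rewrite (exchange_big_dep xpredT) //=; apply: eq_bigr => i _.
rewrite big_const_seq iter_addn_0 mulnC; congr (_ * _).
by apply: eq_count => u; rewrite eq_sym.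
Qed.

Lemma valid_size b w : valid b w -> size w = sumn b.
Proof.
case/andP; rewrite all_count => /eqP <- /allP counts.
rewrite -sum1_count big_mkcond (sum_by_value w id (fun=> 1)) sumnE (big_nth 0) big_mkord.
apply: eq_bigr => i _; rewrite muln1; apply/eqP/counts.
by rewrite mem_iota ltn_ord.
Qed.

Lemma mem_words b w : (w \in words b) = valid b w.
Proof. by rewrite -has_pred1 has_count count_words lt0b. Qed.

Lemma uniq_words b : uniq (words b).
Proof. by apply: count_mem_uniq => w; rewrite count_words mem_words. Qed.

Definition newcomb_list (b : seq nat) (k : nat) : nat := count (fun w => des w == k) (words b).

Lemma newcomb_list_rcons b c j : newcomb_list (rcons b c) j =
  \sum_(i < j.+1) newcomb_list b i * ('C(sumn b - i, j - i) * 'C(c + i, j)).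
Proof.
have per_word u : u \in words b -> count (fun w => des w == j) (ins (size b) u c) =
    if des u < j.+1 then 'C(sumn b - des u, j - des u) * 'C(c + des u, j) else 0.
  rewrite mem_words => vu.
  rewrite (eq_count (a2 := fun w => des (0 :: w) == j)) => [|w]; last by rewrite des_lead0.
  by rewrite count_des_ins ?(andP vu).1 // des_lead0 (valid_size vu).
rewrite /newcomb_list words_rcons count_flatten -map_comp sumnE big_map.
rewrite (eq_big_seq _ per_word).
exact: (sum_by_value _ des (fun i => 'C(sumn b - i, j - i) * 'C(c + i, j))).
Qed.

Lemma newcomb_list_nil k : newcomb_list [::] k = (k == 0).
Proof. by rewrite /newcomb_list /= addn0 eq_sym. Qed.

Lemma newcomb_list_pair b0 b1 k : newcomb_list [:: b0; b1] k = 'C(b0, k) * 'C(b1, k).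
Proof.
have single i : newcomb_list [:: b0] i = (i == 0).
  rewrite -[[:: b0]]/(rcons [::] b0) newcomb_list_rcons big_ord_recl big1 => [|i' _].
    by rewrite newcomb_list_nil bin0n subn0 mul1n addn0 addn0; case: i => [|i]; rewrite ?bin0.
  by rewrite newcomb_list_nil.
rewrite -[[:: b0; b1]]/(rcons [:: b0] b1) newcomb_list_rcons big_ord_recl big1 => [|i _].
  by rewrite single /= !subn0 mul1n !addn0.
by rewrite single.
Qed.

Lemma foldr_maxn_rcons b c : foldr maxn 0 (rcons b c) = maxn (foldr maxn 0 b) c.
Proof. by elim: b => [|x b IH] //=; rewrite ?max0n ?IH ?maxnA. Qed.

Lemma max_le_sum b : foldr maxn 0 b <= sumn b.
Proof. by elim: b => [|x b IH] //=; rewrite geq_max leq_addr (leq_trans IH) ?leq_addl. Qed.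

Lemma newcomb_list_vanish b i : sumn b - foldr maxn 0 b < i -> newcomb_list b i = 0.
Proof.
elim/last_ind: b i => [|b c IH] i; first by rewrite newcomb_list_nil; case: i.
rewrite sumn_rcons foldr_maxn_rcons newcomb_list_rcons => lt_i.
apply: big1 => i' _; have maxb := max_le_sum b.
case: (ltnP (sumn b - foldr maxn 0 b) i') => [/IH -> //| le_i'].
have [c_le|c_gt] := leqP c (foldr maxn 0 b).
  by rewrite (@bin_small (c + i')) ?muln0 //; lia.
by rewrite (@bin_small (sumn b - i')) ?muln0 ?mul0n //; lia.
Qed.

Lemma descents_des n (w : seq 'I_n) : descents w = des (map val w).
Proof. by rewrite /descents; elim: w => [|x [|y w] IH] //=; rewrite IH. Qed.

Lemma count_mem_val n (w : seq 'I_n) (j : 'I_n) : count_mem j w = count_mem (val j) (map val w).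
Proof. by rewrite count_map; apply: eq_count => x; rewrite /= val_eqE. Qed.

Lemma valid_tuple b N (w : N.-tuple 'I_(size b)) :
  valid b (map val w) = [forall j : 'I_(size b), count_mem j w == nth 0 b j].
Proof.
rewrite /valid all_map [X in X && _](_ : _ = true) /=; last by apply/allP => x _; exact: ltn_ord.
apply/allP/forallP => [counts j | counts j].
  by rewrite count_mem_val counts // mem_iota ltn_ord.
by rewrite mem_iota add0n => /= jb; have := counts (Ordinal jb); rewrite count_mem_val.
Qed.

Lemma lift_word n (s : seq nat) : all (fun x => x < n) s ->
  exists w : seq 'I_n, map val w = s.
Proof.
move=> s_lt; exists (pmap insub s); rewrite (pmap_filter (@insubK _ _ _)).
by apply/all_filterP; apply: sub_all s_lt => x x_lt; rewrite /= insubT.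
Qed.

(* Both counts of words agree: [map val] is a bijection between the tuples of
   ordinals counted by [newcomb] and the valid words of [words b]. *)
Lemma newcomb_listE b k : newcomb b k = newcomb_list b k.
Proof.
rewrite /newcomb /newcomb_list cardE -size_filter.
set f := fun w : (sumn b).-tuple 'I_(size b) => map val (val w).
rewrite -(size_map f); apply/perm_size/uniq_perm.
- rewrite map_inj_uniq ?enum_uniq // => w1 w2 /inj_map eq_w.
  by apply/val_inj/eq_w/val_inj.
- by rewrite filter_uniq ?uniq_words.
move=> s; rewrite mem_filter mem_words; apply/mapP/andP => [[w]|[/eqP des_s valid_s]].
  by rewrite mem_enum inE -valid_tuple descents_des => /andP[valid_w /eqP <-] ->.
have [p val_p] := lift_word (andP valid_s).1.
have size_p : size p == sumn b by rewrite -(valid_size valid_s) -val_p size_map.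
exists (Tuple size_p) => //; rewrite mem_enum inE -valid_tuple /= val_p valid_s.
by rewrite /= descents_des val_p des_s.
Qed.

Lemma sum_ord_support n a (F : nat -> nat) : a <= n ->
  (forall i, a <= i < n -> F i = 0) -> \sum_(i < n) F i = \sum_(i < a) F i.
Proof.
move=> le_an F0; rewrite -!(big_mkord xpredT) (@big_cat_nat _ _ _ a) // /=.
by rewrite [X in _ + X]big1_seq ?addn0 // => i /andP[_]; rewrite mem_index_iota; apply: F0.
Qed.

Lemma sum_truncate (M bs k : nat) (F : nat -> nat) : bs <= M ->
  (forall i, bs < i -> F i = 0) ->
  \sum_(x < M.+1) (if x <= minn bs k then F x else 0) = \sum_(i < k.+1) F i.
Proof.
move=> le_bsM F0; rewrite (@sum_ord_support k.+1 (minn bs k).+1) => [||i]; last 2 first.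
- by rewrite ltnS geq_minr.
- by case/andP=> lt_i le_ik; apply: F0; move: lt_i le_ik; rewrite ltnS; lia.
rewrite (@sum_ord_support _ (minn bs k).+1 (fun x => if x <= minn bs k then F x else 0))
  => [||i]; last 2 first.
- by rewrite ltnS (leq_trans (geq_minl _ _)).
- by rewrite ltnNge => /andP[/negbTE ->].
by apply: eq_bigr => i _; rewrite -ltnS ltn_ord.
Qed.

Lemma sum_tuple_rcons m (T : finType) (F : m.+1.-tuple T -> nat) :
  \sum_(t : m.+1.-tuple T) F t = \sum_(t : m.-tuple T) \sum_(x : T) F [tuple of rcons t x].
Proof.
rewrite pair_big /=.
pose h (p : m.-tuple T * T) : m.+1.-tuple T := [tuple of rcons p.1 p.2].
pose g (t : m.+1.-tuple T) : m.-tuple T * T :=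
  ([tuple of belast (thead t) (behead t)], last (thead t) (behead t)).
rewrite (reindex h) //; apply: onW_bij; exists g => [[t x]|t]; rewrite /g /h /=.
  congr pair; last by case: t => [[|y s] ?] //=; rewrite last_rcons.
  by apply: val_inj; case: t => [[|y s] ?] //=; rewrite belast_rcons.
by apply: val_inj; rewrite /= -lastI [in RHS](tuple_eta t).
Qed.

(* The summand of the Delta-sum for n = size v + 2 (zero outside Delta),
   and the Delta-sum itself over tuples of length m = n - 2. *)
Definition delta_term (b : seq nat) (n k : nat) (v : seq nat) : nat :=
  if inDelta b n k v then
    A2 b (idx n k v 2) * \prod_(2 <= s < n) Ast b (idx n k v s) (idx n k v s.+1) s
  else 0.

Definition delta_sum (b : seq nat) (m k : nat) : nat :=
  \sum_(t : m.-tuple 'I_(sumn b).+1) delta_term b m.+2 k [seq val x | x <- t].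

(* Appending i_{n} to the tuple and setting i_{n+1} := k shifts the problem
   from n to n + 1. *)
Lemma idx_rcons m k (v : seq nat) x s : size v = m -> 2 <= s <= m.+2 ->
  idx m.+3 k (rcons v x) s = idx m.+2 x v s.
Proof.
move=> size_v /andP[s2 sm]; rewrite /idx nth_rcons size_v.
have -> : (s == m.+3) = false by apply/negbTE; rewrite neq_ltn ltnS sm.
case: (eqVneq s m.+2) => [->|ne]; first by rewrite !subSS subn0 ltnn !eqxx.
by rewrite ifT //; lia.
Qed.

Lemma inDelta_rcons b m k (v : seq nat) x : size v = m ->
  inDelta b m.+3 k (rcons v x) =
  inDelta b m.+2 x v && (x <= minn (psum b m.+2 - pmax b m.+2) k).
Proof.
move=> size_v; rewrite /inDelta /index_iota.
have -> : m.+3 - 2 = m + 1 by lia.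
have -> : m.+2 - 2 = m by lia.
rewrite iotaD all_cat /= andbT.
congr andb; first by apply: eq_in_all => s; rewrite mem_iota => s_in; rewrite !idx_rcons //; lia.
by rewrite (_ : 2 + m = m.+2) // (@idx_rcons m k v x m.+2) ?leqnn // /idx !eqxx.
Qed.

Lemma delta_term_rcons b m k (v : seq nat) x : size v = m ->
  delta_term b m.+3 k (rcons v x) =
  if x <= minn (psum b m.+2 - pmax b m.+2) k then Ast b x k m.+2 * delta_term b m.+2 x v else 0.
Proof.
move=> size_v; rewrite /delta_term inDelta_rcons //.
case: (inDelta b m.+2 x v) => /=; last by case: ifP; rewrite ?muln0.
case: ifP => // _; rewrite big_nat_recr //= (@idx_rcons m k v x 2) ?leqnn //.
rewrite (@idx_rcons m k v x m.+2) ?leqnn // [idx m.+2 x v m.+2]/idx [idx m.+3 k _ m.+3]/idx !eqxx.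
rewrite [RHS]mulnCA; congr (_ * _); rewrite mulnC; congr (_ * _).
by apply: eq_big_nat => s s_in; rewrite !idx_rcons //; lia.
Qed.

Lemma delta_sum_S b m k : delta_sum b m.+1 k =
  \sum_(x < (sumn b).+1)
     (if x <= minn (psum b m.+2 - pmax b m.+2) k then Ast b x k m.+2 * delta_sum b m x else 0).
Proof.
rewrite /delta_sum sum_tuple_rcons exchange_big /=; apply: eq_bigr => x _.
under eq_bigr => t _ do rewrite map_rcons delta_term_rcons ?size_map ?size_tuple //.
by case: ifP => _; [rewrite big_distrr | rewrite big1].
Qed.

Lemma psum_le b s : psum b s <= sumn b.
Proof. by rewrite /psum -{2}(cat_take_drop s b) sumn_cat leq_addr. Qed.

Lemma delta_sum_newcomb b m k : m.+2 <= size b ->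
  delta_sum b m k = newcomb_list (take m.+2 b) k.
Proof.
elim: m k => [|m IH] k size_b.
  have -> : take 2 b = [:: nth 0 b 0; nth 0 b 1].
    by case: b size_b => [|? [|? ?]] //= _; rewrite take0.
  rewrite newcomb_list_pair /delta_sum (eq_bigr (fun=> A2 b k)) => [|t _].
    by rewrite sum_nat_const card_tuple expn0 mul1n.
  by rewrite tuple0 /delta_term /= big_geq ?muln1.
rewrite delta_sum_S; under eq_bigr => x _ do rewrite (IH x (ltnW size_b)).
rewrite (@sum_truncate _ _ _ (fun i => Ast b i k m.+2 * newcomb_list (take m.+2 b) i)).
- by rewrite (take_nth 0 size_b) newcomb_list_rcons; apply: eq_bigr => i _; rewrite mulnC.
- exact: leq_trans (leq_subr _ _) (psum_le _ _).
- by move=> i lt_i; rewrite newcomb_list_vanish ?muln0.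
Qed.

(* The Delta-sum of the statement is [delta_sum b (n - 2) k], which counts the
   words with multiplicities b and k descents. *)
Theorem mainTheorem11 (b : seq nat) (n : nat) :
  size b = n -> 3 <= n -> all (fun x => 0 < x) b ->
  forall k : nat, k <= sumn b - pmax b n ->
  newcomb b k =
  \sum_(t : (n - 2).-tuple 'I_(sumn b).+1 |
          inDelta b n k [seq val x | x <- t])
     A2 b (idx n k [seq val x | x <- t] 2) *
     \prod_(2 <= s < n) Ast b (idx n k [seq val x | x <- t] s)
                              (idx n k [seq val x | x <- t] s.+1) s.
Proof.
move=> size_b n3 _ k _; case: n size_b n3 => [|[|m]] // size_b _.
have -> : m.+2 - 2 = m by lia.
rewrite big_mkcond -/(delta_sum b m k) delta_sum_newcomb ?size_b //.
by rewrite -size_b take_size newcomb_listE.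
Qed.
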